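(* Let $L$ be a subspace of $\bigwedge^{k}V$, let $I\subseteq[n]$ be nonempty, and let $a=\min I$. Suppose $N_{j\to i}L=L$ for all $i<j$ with $i,j\in I$. Then $L$ has a basis consisting of elements of the form $x\wedge y$, where $x$ is a homogeneous form in $\bigwedge V^{(I\setminus\{a\})}$ and $y$ is a monomial whose variable set is a subset of $\{e_h:h\in I\}$.
   Context: $\mathbb{F}$ is a field (assumed throughout the paper, for expository purposes, to have characteristic not $2$), $V$ is an $n$-dimensional $\mathbb{F}$-vector space with a fixed basis $e_1,\dots,e_n$, and $\bigwedge V$ its exterior algebra; for $S=\{s_1<\cdots<s_r\}\subseteq[n]$, the monomial $e_S=e_{s_1}\wedge\cdots\wedge e_{s_r}$ has variable set $\{e_s:s\in S\}$, and the monomials with $|S|=k$ form a basis of $\bigwedge^kV$. For $J\subseteq[n]$, $V^{(J)}$ is the span of $\{e_h:h\notin J\}$ (so $V^{(I\setminus\{a\})}$ is spanned by $e_a$ and the $e_h$ with $h\notin I$), $V^{(j)}=V^{(\{j\})}$, and $\bigwedge V^{(J)}$ is viewed as a subalgebra of $\bigwedge V$. Slow shift: for distinct $i,j\in[n]$ and nonzero $m\in\bigwedge^kV$, write uniquely $m=x'+e_j\wedge y'$ with $x'\in\bigwedge^kV^{(j)}$, $y'\in\bigwedge^{k-1}V^{(j)}$, and set $N_{j\to i}m=x'+e_i\wedge y'$ if this is nonzero, and $N_{j\to i}m=e_j\wedge y'$ otherwise (the limit as $t\to0$ of the projective action of $e_j\mapsto e_i+te_j$ fixing the other $e_h$). For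 a subspace $L$, $N_{j\to i}L$ is the span of $\{N_{j\to i}m:m\in L\setminus\{0\}\}$. *)

(* Exterior algebra of V = F^n with basis e_0..e_{n-1},
   represented by coefficient vectors indexed by subsets S of 'I_n
   (the coefficient of the monomial e_S). *)
From HB Require Import structures.
From mathcomp Require Import all_boot all_order all_algebra.
Set Implicit Arguments. Unset Strict Implicit. Unset Printing Implicit Defensive.
Import Order.TTheory GRing.Theory Num.Theory.
Local Open Scope ring_scope.

Definition ext (F : fieldType) (n : nat) := {ffun {set 'I_n} -> F^o}.

Definition emono (F : fieldType) (n : nat) (S : {set 'I_n}) : ext F n :=
  [ffun U => (U == S)%:R].

(* Sign of e_S /\ e_T = sgn S T * e_(S u T) for disjoint S, T:
   (-1)^(number of pairs s in S, t in T with t < s). *)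
Definition wsign (F : fieldType) (n : nat) (S T : {set 'I_n}) : F :=
  (-1) ^+ #|[set p : 'I_n * 'I_n | [&& p.1 \in S, p.2 \in T & (p.2 < p.1)%N]]|.

Definition wedge (F : fieldType) (n : nat) (x y : ext F n) : ext F n :=
  [ffun U => \sum_(S : {set 'I_n}) \sum_(T : {set 'I_n} |
        (S :&: T == set0) && (S :|: T == U)) wsign F S T * x S * y T].

Definition homog (F : fieldType) (n : nat) (k : nat) (x : ext F n) : Prop :=
  forall S : {set 'I_n}, #|S| != k -> x S = 0.

(* x lies in the subalgebra /\ V^(J), V^(J) = span{e_h : h \notin J}. *)
Definition in_sub (F : fieldType) (n : nat) (J : {set 'I_n}) (x : ext F n) : Prop :=
  forall S : {set 'I_n}, x S != 0 -> [disjoint S & J].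

(* Decomposition m = x' + e_j /\ y' with x', y' in /\ V^(j). *)
Definition xpart (F : fieldType) (n : nat) (j : 'I_n) (m : ext F n) : ext F n :=
  [ffun S : {set 'I_n} => if j \in S then 0 else m S].
Definition ypart (F : fieldType) (n : nat) (j : 'I_n) (m : ext F n) : ext F n :=
  [ffun T : {set 'I_n} => if j \in T then 0
             else ((-1) ^+ #|[set t in T | (t < j)%N]| : F) * m (j |: T)].

Definition slow_shift (F : fieldType) (n : nat) (j i : 'I_n) (m : ext F n) : ext F n :=
  let c := xpart j m + wedge (emono F [set i]) (ypart j m) in
  if c != 0 then c else wedge (emono F [set j]) (ypart j m).

Definition in_span (F : fieldType) (n : nat) (P : ext F n -> Prop) (v : ext F n) : Prop :=
  forall U : {vspace ext F n}, (forall w, P w -> w \in U) -> v \in U.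

Definition shift_fixed (F : fieldType) (n : nat) (j i : 'I_n) (L : {vspace ext F n}) : Prop :=
  forall v, in_span (fun w => exists m, [/\ m \in L, m != 0 & w = slow_shift j i m]) v
            <-> v \in L.

From HB Require Import structures.
From mathcomp Require Import all_boot all_order all_algebra.
Set Implicit Arguments. Unset Strict Implicit. Unset Printing Implicit Defensive.
Import Order.TTheory GRing.Theory Num.Theory.
Local Open Scope ring_scope.

(* For i != j, a slow shift N_{j -> i} m either involves no
   monomial containing e_j or only such monomials, so a shift-fixed L is spanned
   by vectors of these two kinds: L is stable under the coordinate projection
   killing the monomials that contain e_j.  Combining these projections for
   j in J = I \ {a}, L is the direct sum over T \subset J of its subspaces L_T
   of vectors supported on the monomials e_U with U :&: J = T, and every vector
   of L_T factors as x /\ e_T with x in /\ V^(J).  Concatenating bases of the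
   L_T gives the required basis. *)

Lemma disjoint_cover_eq (T : finType) (S V U : {set T}) :
  (S :&: V == set0) && (S :|: V == U) = (S \subset U) && (V == U :\: S).
Proof.
apply/andP/andP => [[/eqP dSV /eqP <-] | [sSU /eqP ->]]; split.
- exact: subsetUl.
- rewrite setDUl setDv set0U; apply/eqP/esym/setDidPl.
  by rewrite -setI_eq0 setIC dSV.
- by apply/eqP/setP => x; rewrite !inE; case: (x \in S); rewrite ?andbF.
- by rewrite -{2}(setID U S) (setIidPr sSU).
Qed.

Lemma directv_basis (K : fieldType) (vT : vectType K) (I : finType) (P : pred I)
    (U : I -> {vspace vT}) :
  directv (\sum_(i | P i) U i) ->
  exists b, basis_of (\sum_(i | P i) U i) b /\
            forall v, v \in b -> exists2 i, P i & v \in U i.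
Proof.
move=> dirU; exists (\big[cat/[::]]_(i | P i) vbasis (U i)); split.
  by apply: bigcat_basis => // i _; apply: vbasisP.
elim/big_rec: _ => [//|i b Pi IHb v].
by rewrite mem_cat => /orP[/vbasis_mem vUi | /IHb //]; exists i.
Qed.

Section Wedge.
Variables (F : fieldType) (n : nat).
Implicit Types (x y : ext F n) (S T U : {set 'I_n}).

Lemma wsignK S T : wsign F S T * wsign F S T = 1.
Proof. by rewrite /wsign -exprMn mulrNN mulr1 expr1n. Qed.

Lemma emono_wedgeE T y U :
  wedge (emono F T) y U =
  if T \subset U then wsign F T (U :\: T) * y (U :\: T) else 0.
Proof.
rewrite ffunE (bigD1 T) //= [X in _ + X]big1 ?addr0 => [|S /negPf neST]; last first.
  by rewrite big1 // => V _; rewrite ffunE neST mulr0 mul0r.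
under eq_bigl do rewrite disjoint_cover_eq.
rewrite ffunE eqxx; case: ifP => sTU; last by rewrite big_pred0.
by rewrite (big_pred1 (U :\: T)) ?mulr1.
Qed.

Lemma wedge_emonoE x T U :
  wedge x (emono F T) U =
  if T \subset U then wsign F (U :\: T) T * x (U :\: T) else 0.
Proof.
have emono_sum S : \sum_(V | (S :&: V == set0) && (S :|: V == U))
    wsign F S V * x S * emono F T V =
    if (T :&: S == set0) && (T :|: S == U) then wsign F S T * x S else 0.
  rewrite big_mkcond (bigD1 T) //= ffunE eqxx mulr1 setIC setUC big1 ?addr0 //.
  by move=> V /negPf neVT; rewrite ffunE neVT mulr0; case: ifP.
rewrite ffunE (eq_bigr _ (fun S _ => emono_sum S)) -big_mkcond /=.
under eq_bigl do rewrite disjoint_cover_eq.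
case: ifP => sTU; last by rewrite big_pred0.
by rewrite (big_pred1 (U :\: T)).
Qed.

End Wedge.

Section Masks.
Variables (F : fieldType) (n : nat).
Implicit Types (p q : pred {set 'I_n}) (v w : ext F n) (L : {vspace ext F n}).

Definition mask p v : ext F n := [ffun S => if p S then v S else 0].

Fact mask_is_linear p : linear (mask p).
Proof.
by move=> c u v; apply/ffunP => S; rewrite !ffunE; case: ifP; rewrite ?scaler0 ?addr0.
Qed.
HB.instance Definition _ p :=
  GRing.isLinear.Build F (ext F n) (ext F n) *:%R (mask p) (mask_is_linear p).

Definition supp_space p : {vspace ext F n} := limg (linfun (mask p)).

Lemma supp_spaceP p v : reflect (forall S, ~~ p S -> v S = 0) (v \in supp_space p).
Proof.
apply: (iffP memv_imgP) => [[u _ ->] S /negPf pS | v0].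
  by rewrite lfunE ffunE pS.
exists v; rewrite ?memvf // lfunE; apply/ffunP => S; rewrite ffunE.
by case: ifPn => // /v0 ->.
Qed.

Lemma mask_supp p v : mask p v \in supp_space p.
Proof. by apply/supp_spaceP => S /negPf pS; rewrite ffunE pS. Qed.

Lemma mask_id p v : v \in supp_space p -> mask p v = v.
Proof.
by move/supp_spaceP => v0; apply/ffunP => S; rewrite ffunE; case: ifPn => // /v0 ->.
Qed.

Lemma eq_mask p q : p =1 q -> mask p =1 mask q.
Proof. by move=> epq v; apply/ffunP => S; rewrite !ffunE epq. Qed.

Lemma maskI p q v : mask p (mask q v) = mask (fun S => p S && q S) v.
Proof. by apply/ffunP => S; rewrite !ffunE; case: (p S). Qed.

Lemma maskC p v : mask (fun S => ~~ p S) v = v - mask p v.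
Proof. by apply/ffunP => S; rewrite !ffunE; case: (p S); rewrite ?subrr ?subr0. Qed.

Lemma maskT v : mask xpredT v = v.
Proof. by apply/ffunP => S; rewrite ffunE. Qed.

Definition mask_closed L p := forall v, v \in L -> mask p v \in L.

Lemma eq_mask_closed L p q : p =1 q -> mask_closed L p -> mask_closed L q.
Proof. by move=> epq Lp v vL; rewrite -(eq_mask epq) Lp. Qed.

Lemma mask_closedI L p q :
  mask_closed L p -> mask_closed L q -> mask_closed L (fun S => p S && q S).
Proof. by move=> Lp Lq v vL; rewrite -maskI Lp ?Lq. Qed.

Lemma mask_closedC L p : mask_closed L p -> mask_closed L (fun S => ~~ p S).
Proof. by move=> Lp v vL; rewrite maskC memvB ?Lp. Qed.

Lemma mask_closed_all L (I : eqType) (q : I -> pred {set 'I_n}) (s : seq I) :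
  (forall i, i \in s -> mask_closed L (q i)) ->
  mask_closed L (fun S => all (q^~ S) s).
Proof.
elim: s => [_ v vL | i s IHs Lq]; first by rewrite maskT.
apply: mask_closedI; first exact/Lq/mem_head.
by apply: IHs => j js; apply/Lq; rewrite inE js orbT.
Qed.

Lemma mask_closed_split L p :
  (L <= (L :&: supp_space p) + (L :&: supp_space (fun S => ~~ p S)))%VS ->
  mask_closed L p.
Proof.
move=> splitL v /(subvP splitL)/memv_addP[v1 + [v0 + ->]].
rewrite !memv_cap => /andP[v1L /mask_id v1p] /andP[_ /supp_spaceP v0p].
suff v0p0 : mask p v0 = 0 by rewrite linearD /= v1p v0p0 addr0.
by apply/ffunP => S; rewrite !ffunE; case: ifP => // pS; rewrite v0p ?pS.
Qed.

End Masks.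

Section Grading.
Variables (F : fieldType) (n : nat).
Implicit Types (v : ext F n) (S T J : {set 'I_n}) (L : {vspace ext F n}).

Lemma directv_supp (I : finType) (P : pred I) (p : I -> pred {set 'I_n})
    (U : I -> {vspace ext F n}) :
  (forall i j S, p i S -> p j S -> i = j) ->
  (forall i, P i -> (U i <= supp_space F (p i))%VS) ->
  directv (\sum_(i | P i) U i).
Proof.
move=> p_uniq sUp; apply/directv_sum_independent => u Uu u0 i Pi.
have u_supp j : P j -> forall S, ~~ p j S -> u j S = 0.
  by move=> Pj; apply/supp_spaceP/(subvP (sUp j Pj))/Uu.
apply/ffunP => S; rewrite ffunE; have [piS|] := boolP (p i S); last exact: u_supp.
have := congr1 (fun w : ext F n => w S) u0; rewrite sum_ffunE ffunE (bigD1 i) //=.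
rewrite big1 ?addr0 // => j /andP[Pj nji]; apply: u_supp => //.
by apply: contra nji => pjS; rewrite (p_uniq j i S).
Qed.

Definition trace_space L J T : {vspace ext F n} :=
  capv L (supp_space F (fun S => S :&: J == T)).

Lemma directv_trace_space L J :
  directv (\sum_(T : {set 'I_n} | T \subset J) trace_space L J T).
Proof.
apply: (directv_supp (p := fun T S => S :&: J == T)) => [T T' S /eqP <- /eqP // | T _].
exact: capvSr.
Qed.

Lemma sum_mask_trace J v :
  v = \sum_(T : {set 'I_n} | T \subset J) mask (fun S => S :&: J == T) v.
Proof.
apply/ffunP => U; rewrite sum_ffunE (bigD1 (U :&: J)) ?subsetIr //= ffunE eqxx.
by rewrite big1 ?addr0 // => T /andP[_ neT]; rewrite ffunE eq_sym (negPf neT).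
Qed.

Lemma sum_trace_space L J :
  (forall T, T \subset J -> mask_closed L (fun S => S :&: J == T)) ->
  (\sum_(T : {set 'I_n} | T \subset J) trace_space L J T)%VS = L.
Proof.
move=> closedL; apply/eqP; rewrite eqEsubv; apply/andP; split.
  by apply/subv_sumP => T _; apply: capvSl.
apply/subvP => v vL; rewrite [v](sum_mask_trace J); apply: memv_sumr => T sTJ.
by rewrite memv_cap closedL ?mask_supp.
Qed.

Lemma mask_closed_trace L J T :
  T \subset J -> (forall j, j \in J -> mask_closed L (fun S => j \notin S)) ->
  mask_closed L (fun S => S :&: J == T).
Proof.
move=> sTJ closedL.
apply: (eq_mask_closed
  (p := fun S => all (fun j => (j \in S) == (j \in T)) (enum J))).
  move=> S; apply/allP/eqP => [eqST | <- j].
    apply/setP => j; rewrite inE; have [jJ|jJ] := boolP (j \in J).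
      by rewrite andbT; apply/eqP/eqST; rewrite mem_enum.
    by rewrite andbF; apply/esym/negbTE; apply: contra jJ; apply: (subsetP sTJ).
  by rewrite mem_enum inE => ->; rewrite andbT.
apply: mask_closed_all => j; rewrite mem_enum => /closedL Lj.
have [jT|jT] := boolP (j \in T);
  [apply: eq_mask_closed (mask_closedC Lj) | apply: eq_mask_closed Lj] => S;
  by move: jT; case: (j \in S); case: (j \in T).
Qed.

Lemma slow_shift_supp (i j : 'I_n) (m : ext F n) : i != j ->
  slow_shift j i m \in supp_space F (fun S => j \notin S) \/
  slow_shift j i m \in supp_space F (fun S => j \in S).
Proof.
move=> nij; rewrite /slow_shift; case: ifP => _; [left | right]; apply/supp_spaceP => S.
  rewrite negbK => jS; rewrite ffunE [xpart _ _ _]ffunE jS add0r emono_wedgeE.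
  by case: ifP => // _; rewrite ffunE !inE jS andbT (eq_sym j) nij mulr0.
by move=> jS; rewrite emono_wedgeE sub1set (negPf jS).
Qed.

Lemma shift_fixed_mask_closed (i j : 'I_n) L :
  i != j -> shift_fixed j i L -> mask_closed L (fun S => j \notin S).
Proof.
move=> nij fixL; apply: mask_closed_split; apply/subvP => v /(fixL v).2; apply.
move=> _ [m [mL m0 ->]].
have NmL : slow_shift j i m \in L by apply/(fixL _).1 => U; apply; exists m.
case: (slow_shift_supp m nij) => Nm_supp.
  by apply: (subvP (addvSl _ _)); rewrite memv_cap NmL.
apply: (subvP (addvSr _ _)); rewrite memv_cap NmL /=.
by move/supp_spaceP: Nm_supp => Nm0; apply/supp_spaceP => S; rewrite negbK; apply: Nm0.
Qed.

Lemma wedge_emono_factor k J T v :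
  T \subset J -> homog k v -> v \in supp_space F (fun S => S :&: J == T) ->
  exists x d, [/\ homog d x, in_sub J x & v = wedge x (emono F T)].
Proof.
move=> sTJ hv /supp_spaceP vT.
have vU U : v U != 0 -> U :&: J = T by apply: contraNeq => /vT ->.
pose x : ext F n :=
  [ffun S : {set 'I_n} => if [disjoint S & J] then wsign F S T * v (S :|: T) else 0].
exists x, (k - #|T|)%N; split.
- move=> S dS; rewrite ffunE; case: ifP => // dSJ; rewrite hv ?mulr0 //.
  have dST : S :&: T = set0 by apply/eqP; rewrite setI_eq0; apply: disjointWr sTJ dSJ.
  by apply: contra dS => /eqP <-; rewrite cardsU dST cards0 subn0 addnK.
- by move=> S; rewrite ffunE; case: ifP; rewrite ?eqxx.
apply/ffunP => U; rewrite wedge_emonoE ffunE; case: ifPn => [sTU | nsTU]; last first.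
  by apply: contraNeq nsTU => /vU <-; apply: subsetIl.
have -> : U :\: T :|: T = U by rewrite setUC -{1}(setIidPr sTU) setID.
case: ifP => dUJ; first by rewrite mulrA wsignK mul1r.
rewrite mulr0; apply: contraFeq dUJ => /vU UJ.
by rewrite -setI_eq0 setIC setIDA setIC UJ setDv.
Qed.

End Grading.

Theorem theorem3p13 (F : fieldType) (hchar : (2%:R : F) != 0)
  (n k : nat) (L : {vspace ext F n})
  (hL : forall v, v \in L -> homog k v)
  (I : {set 'I_n}) (a : 'I_n) (ha : a \in I) (hmin : forall h, h \in I -> (a <= h)%N)
  (hfix : forall i j : 'I_n, i \in I -> j \in I -> (i < j)%N -> shift_fixed j i L) :
  exists b : seq (ext F n),
    basis_of L b /\
    forall v, v \in b ->
      exists (x : ext F n) (d : nat) (S : {set 'I_n}),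
        [/\ homog d x, in_sub (I :\ a) x, S \subset I & v = wedge x (emono F S)].
Proof.
set J := I :\ a.
have closedJ j : j \in J -> mask_closed L (fun S => j \notin S).
  rewrite in_setD1 => /andP[nja jI].
  apply: (shift_fixed_mask_closed _ (hfix a j ha jI _)); first by rewrite eq_sym.
  by rewrite ltn_neqAle hmin // andbT (inj_eq val_inj) eq_sym.
have [b [bL bT]] := directv_basis (directv_trace_space L J).
rewrite sum_trace_space in bL => [|T sTJ]; last exact: mask_closed_trace.
exists b; split => // v /bT[T sTJ]; rewrite memv_cap => /andP[vL vT].
have [x [d [hx sx ->]]] := wedge_emono_factor sTJ (hL v vL) vT.
by exists x, d, T; split => //; apply: subset_trans sTJ (subsetDl _ _).
Qed.
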